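(* Let ${\boldsymbol{k}}=(k_1,\dots,k_r)\in\mathbb{Z}^r$ with $r\ge2$, and suppose $k_i=-k$ for some $i\in\{1,\dots,r\}$ and some integer $k\ge0$. Then in $\widehat{\mathcal{A}}$: (i) If $i=1$, \[\zeta_{\widehat{\mathcal{A}}}({\boldsymbol{k}})=\frac{1}{k+1}\sum_{j=0}^{k+1}\binom{k+1}{j}B_j\Bigl((-1)^j\zeta_{\widehat{\mathcal{A}}}(k_2-k-1+j,k_3,\dots,k_r)-\delta_{j,k+1}\,\zeta_{\widehat{\mathcal{A}}}(k_2,\dots,k_r)\Bigr).\] (ii) If $1<i<r$, \[\zeta_{\widehat{\mathcal{A}}}({\boldsymbol{k}})=\frac{1}{k+1}\sum_{j=0}^{k+1}\binom{k+1}{j}B_j\Bigl((-1)^j\zeta_{\widehat{\mathcal{A}}}({\boldsymbol{k}}^{+}_j)-\zeta_{\widehat{\mathcal{A}}}({\boldsymbol{k}}^{-}_j)\Bigr),\] where ${\boldsymbol{k}}^{+}_j=(k_1,\dots,k_{i-1},k_{i+1}-k-1+j,k_{i+2},\dots,k_r)$ and ${\boldsymbol{k}}^{-}_j=(k_1,\dots,k_{i-2},k_{i-1}-k-1+j,k_{i+1},\dots,k_r)$ (both obtained from ${\boldsymbol{k}}$ by deleting the $i$-th entry and modifying the indicated neighbouring entry). (iii) If $i=r$, \[\zeta_{\widehat{\mathcal{A}}}({\boldsymbol{k}})=\frac{1}{k+1}\sum_{j=0}^{k+1}\binom{k+1}{j}B_j\Bigl((-1)^j\zeta_{\widehat{\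mathcal{A}}}(k_1,\dots,k_{r-1})\,{\boldsymbol{p}}^{k+1-j}-\zeta_{\widehat{\mathcal{A}}}(k_1,\dots,k_{r-2},k_{r-1}-k-1+j)\Bigr).\]
   Context: $B_n$ are the Seki–Bernoulli numbers defined by $ze^z/(e^z-1)=\sum_{n\ge0}B_nz^n/n!$ (so $B_1=1/2$), and $\delta$ is the Kronecker delta. Let $\widehat{\mathcal{A}}=\varprojlim_n\bigl[(\prod_{p}\mathbb{Z}/p^n\mathbb{Z})/(\bigoplus_p\mathbb{Z}/p^n\mathbb{Z})\bigr]$ ($p$ over primes), a $\mathbb{Q}$-algebra. For any integer index ${\boldsymbol{k}}=(k_1,\dots,k_r)$ (entries possibly non-positive) and prime $p$, $\zeta_p({\boldsymbol{k}})=\sum_{0<n_1<\cdots<n_r<p}n_1^{-k_1}\cdots n_r^{-k_r}\in\mathbb{Z}_{(p)}$, and $\zeta_{\widehat{\mathcal{A}}}({\boldsymbol{k}})=\bigl((\zeta_p({\boldsymbol{k}})\bmod p^n)_p\bigr)_n$; for the empty index this value is $1$. ${\boldsymbol{p}}=((p\bmod p^n)_p)_n\in\widehat{\mathcal{A}}$, with ${\boldsymbol{p}}^0=1$. *)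

From mathcomp Require Import all_boot all_order all_algebra.
Set Implicit Arguments. Unset Strict Implicit. Unset Printing Implicit Defensive.
Import Order.TTheory GRing.Theory Num.Theory.
Local Open Scope ring_scope.

(* Seki-Bernoulli numbers (B_1 = 1/2): from z e^z/(e^z-1) * (e^z-1)/z = e^z,
   sum_{j=0}^{n} C(n+1,j) B_j = n+1 for all n >= 0. *)
Fixpoint bern_list (n : nat) : seq rat :=
  match n with
  | 0%N => [:: 1]
  | n'.+1 =>
      let l := bern_list n' in
      rcons l ((n'.+2%:R - \sum_(j < n'.+1) 'C(n'.+2, j)%:R * nth 0 l j) / n'.+2%:R)
  end.
Definition bernoulli (n : nat) : rat := nth 0 (bern_list n) n.

(* zrev [:: k_r; ...; k_1] m = sum_{0<n_1<...<n_r<m} n_1^{-k_1} ... n_r^{-k_r} *)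
Fixpoint zrev (ks : seq int) (m : nat) : rat :=
  match ks with
  | [::] => 1
  | k :: ks' => \sum_(1 <= n < m) (n%:R : rat) ^ (- k) * zrev ks' n
  end.

Definition zeta_p (p : nat) (ks : seq int) : rat := zrev (rev ks) p.

(* Elements of hat-A are represented by families (x_p)_p of rationals,
   almost all p-integral; (x_p)_p is sent to ((x_p mod p^n)_p)_n. *)
Definition Afam := nat -> rat.

Definition pdiv_rat (p n : nat) (x : rat) : bool :=
  ((p ^ n)%:Z %| numq x)%Z && ~~ ((p%:Z) %| denq x)%Z.

Definition Aeq (x y : Afam) : Prop :=
  forall n : nat, exists N : nat,
    forall p : nat, prime p -> (N <= p)%N -> pdiv_rat p n (x p - y p).

Definition zetaA (ks : seq int) : Afam := fun p => zeta_p p ks.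

From mathcomp Require Import all_boot all_order all_algebra.
From mathcomp Require Import ring zify.
Set Implicit Arguments. Unset Strict Implicit. Unset Printing Implicit Defensive.
Import Order.TTheory GRing.Theory Num.Theory.
Local Open Scope ring_scope.

(* The polynomial bernpoly K x = sum_j C(K,j) B_j x^(K-j) satisfies
   bernpoly K (x + 1) - bernpoly K x = K (x + 1)^(K-1).  At x = -1 this gives
   (-1)^j B_j = B_j - [j = 1], and telescoping gives Faulhaber's formula
     sum_(t < l < n) l^k = 1/(k+1) sum_j C(k+1,j) B_j ((-1)^j n^(k+1-j) - t^(k+1-j)).
   In zeta_p(k) the variable n_i of exponent -k runs over n_(i-1) < n_i < n_(i+1),
   with n_0 = 0 and n_(r+1) = p.  Summing it out by this formula and absorbing the
   powers n_(i-1)^(k+1-j), n_(i+1)^(k+1-j) into the neighbouring factors gives the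
   three formulas as exact identities in Q for every p (0^(k+1-j) is the Kronecker
   delta of (i), p^(k+1-j) the power of p in (iii)), and a fortiori in hat-A. *)

Lemma size_bern_list n : size (bern_list n) = n.+1.
Proof. by elim: n => //= n IH; rewrite size_rcons IH. Qed.

Lemma nth_bern_list m j : (j <= m)%N -> nth 0 (bern_list m) j = bernoulli j.
Proof.
elim: m => [|m IH]; first by rewrite leqn0 => /eqP->.
rewrite leq_eqVlt => /predU1P[-> //|ltjm].
by rewrite /= nth_rcons size_bern_list ltjm IH.
Qed.

Lemma bernoulli_rec n : \sum_(j < n.+1) 'C(n.+1, j)%:R * bernoulli j = n.+1%:R.
Proof.
case: n => [|n]; first by rewrite big_ord1 mul1r.
rewrite big_ord_recr /= binSn.
have -> : bernoulli n.+1
    = (n.+2%:R - \sum_(j < n.+1) 'C(n.+2, j)%:R * bernoulli j) / n.+2%:R.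
  rewrite {1}/bernoulli /= nth_rcons size_bern_list ltnn eqxx.
  by congr (_ / _); congr (_ - _); apply: eq_bigr => j _; rewrite nth_bern_list // -ltnS.
by rewrite mulrC divfK ?pnatr_eq0 // addrC subrK.
Qed.

Lemma sum_bin_bernoulli n :
  \sum_(j < n.+1) 'C(n, j)%:R * bernoulli j = bernoulli n + n%:R.
Proof.
case: n => [|n]; first by rewrite big_ord1 mul1r addr0.
by rewrite big_ord_recr /= bernoulli_rec binn mul1r addrC.
Qed.

Lemma binomial_recurrence_inj (R : numDomainType) (x y : nat -> R) :
  (forall m, \sum_(j < m.+1) 'C(m.+1, j)%:R * x j
           = \sum_(j < m.+1) 'C(m.+1, j)%:R * y j) ->
  x =1 y.
Proof.
move=> eq_xy; elim/ltn_ind => n IH.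
have := eq_xy n; rewrite !big_ord_recr /= binSn.
rewrite (eq_bigr (fun j : 'I_n => 'C(n.+1, j)%:R * y j)) => [/addrI|j _].
  by apply: mulfI; rewrite pnatr_eq0.
by rewrite IH.
Qed.

Lemma mul_binC n i j : ('C(n, i) * 'C(n - i, j) = 'C(n, j) * 'C(n - j, i))%N.
Proof.
have vanish a b : (n < a + b)%N -> ('C(n, a) * 'C(n - a, b) = 0)%N.
  case: (leqP a n) => ha hab; last by rewrite bin_small.
  by rewrite (@bin_small (n - a)) ?muln0 //; lia.
have [le_ijn|lt_n_ij] := leqP (i + j) n; last first.
  by rewrite !vanish // addnC.
have multinomial a b : (a + b <= n)%N ->
    ('C(n, a) * 'C(n - a, b) * (a`! * b`! * (n - (a + b))`!) = n`!)%N.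
  move=> le_abn; have le_an : (a <= n)%N by lia.
  have le_b_na : (b <= n - a)%N by lia.
  by rewrite -(bin_fact le_an) -(bin_fact le_b_na) subnDA; ring.
have pos : (0 < i`! * j`! * (n - (i + j))`!)%N by rewrite !muln_gt0 !fact_gt0.
apply/eqP; rewrite -(eqn_pmul2r pos) multinomial //.
by rewrite [(i`! * _)%N]mulnC addnC multinomial // addnC.
Qed.

Lemma sum_bin_widen (R : pzSemiRingType) n m (F : nat -> R) : (n <= m)%N ->
  \sum_(i < n.+1) 'C(n, i)%:R * F i = \sum_(i < m.+1) 'C(n, i)%:R * F i.
Proof.
move=> le_nm; rewrite (big_ord_widen m.+1 (fun i => 'C(n, i)%:R * F i)) //.
rewrite big_mkcond; apply: eq_bigr => i _.
by case: ltnP => // lt_ni; rewrite bin_small // mul0r.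
Qed.

(* Since B_1 = +1/2, bernpoly K x is the classical Bernoulli polynomial B_K(x + 1). *)
Definition bernpoly (K : nat) (x : rat) : rat :=
  \sum_(j < K.+1) 'C(K, j)%:R * (bernoulli j * x ^+ (K - j)).

Lemma bernpolyD K x y :
  bernpoly K (x + y) = \sum_(i < K.+1) 'C(K, i)%:R * bernpoly (K - i) x * y ^+ i.
Proof.
rewrite /bernpoly.
under eq_bigr => j _.
  rewrite exprDn; under eq_bigr => i _ do rewrite -mulr_natl.
  rewrite (sum_bin_widen (fun i => x ^+ (K - j - i) * y ^+ i) (leq_subr j K)).
  rewrite !mulr_sumr; over.
rewrite exchange_big /=; apply: eq_bigr => i _.
rewrite (sum_bin_widen (fun j => bernoulli j * x ^+ (K - i - j)) (leq_subr i K)).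
rewrite mulr_sumr mulr_suml.
apply: eq_bigr => j _.
have := congr1 (fun n => n%:R : rat) (mul_binC K j i); rewrite !natrM => binC.
transitivity ('C(K, j)%:R * 'C(K - j, i)%:R * bernoulli j * x ^+ (K - j - i) * y ^+ i).
  by ring.
by rewrite binC subnAC; ring.
Qed.

Lemma bernpoly0 K : bernpoly K 0 = bernoulli K.
Proof.
rewrite /bernpoly big_ord_recr /= subnn expr0 binn mul1r mulr1 big1 ?add0r //.
by move=> j _; rewrite expr0n subn_eq0 leqNgt ltn_ord !mulr0.
Qed.

Lemma bernpoly1 K : bernpoly K 1 = bernoulli K + K%:R.
Proof.
by rewrite /bernpoly; under eq_bigr do rewrite expr1n mulr1; exact: sum_bin_bernoulli.
Qed.

Lemma bernpolyS K x : bernpoly K (x + 1) - bernpoly K x = K%:R * (x + 1) ^+ K.-1.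
Proof.
rewrite [in LHS](addrC x 1) -[in X in _ - X](add0r x) !bernpolyD -sumrB.
transitivity (\sum_(i < K.+1) 'C(K, i)%:R * (K - i)%:R * x ^+ i).
  by apply: eq_bigr => i _; rewrite bernpoly1 bernpoly0; ring.
case: K => [|k]; first by rewrite big_ord1 subnn !(mulr0, mul0r).
rewrite big_ord_recr /= subnn mulr0 mul0r addr0 addrC exprDn mulr_sumr.
apply: eq_bigr => i _; rewrite expr1n mul1r -[_ *+ 'C(k, i)]mulr_natl mulrA.
have := congr1 (fun n => n%:R : rat) (mul_bin_down k.+1 i); rewrite !natrM /= => ->.
by ring.
Qed.

Lemma bernpolyN1 K : bernpoly K (-1) = bernoulli K - (K == 1)%:R.
Proof.
have := bernpolyS K (-1); rewrite addNr bernpoly0 expr0n => E.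
have -> : bernpoly K (-1) = bernoulli K - (bernoulli K - bernpoly K (-1)) by ring.
by rewrite E; case: K E => [|[|k]] _ /=; rewrite ?mul0r ?mulr1 ?mulr0.
Qed.

Lemma signr_subn_mul n j :
  (j <= n)%N -> (-1) ^+ (n - j) * (-1) ^+ n = (-1) ^+ j :> rat.
Proof. by move=> le_jn; rewrite -{2}(subnK le_jn) exprD signrMK. Qed.

(* Both sides solve sum_(j <= m) C(m+1, j) y_j = [m == 0], which determines y. *)
Lemma signr_bernoulli n : (-1) ^+ n * bernoulli n = bernoulli n - (n == 1)%:R.
Proof.
move: n; apply: binomial_recurrence_inj => m.
have -> : \sum_(j < m.+1) 'C(m.+1, j)%:R * ((-1) ^+ j * bernoulli j) = (m == 0)%:R.
  have := bernpolyN1 m.+1.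
  rewrite /bernpoly big_ord_recr /= subnn expr0 binn mul1r mulr1 => E.
  transitivity ((-1) ^+ m.+1 *
      \sum_(j < m.+1) 'C(m.+1, j)%:R * (bernoulli j * (-1) ^+ (m.+1 - j))).
    rewrite mulr_sumr; apply: eq_bigr => j _.
    by rewrite -(signr_subn_mul (ltnW (ltn_ord j))); ring.
  rewrite -(addrK (bernoulli m.+1) (\sum_(j < m.+1) _)) E.
  by case: m {E} => [|m] /=; ring.
under eq_bigr do rewrite mulrBr.
rewrite sumrB bernoulli_rec; case: m => [|m]; first by rewrite big_ord1 mulr0 subr0.
rewrite 2!big_ord_recl big1 => [|j _]; last by rewrite mulr0.
by rewrite bin1 /= !(mulr0, mulr1, add0r, addr0) subrr.
Qed.

Lemma bernpolyB1 K x :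
  bernpoly K (x - 1) =
  \sum_(j < K.+1) 'C(K, j)%:R * ((-1) ^+ j * bernoulli j * x ^+ (K - j)).
Proof.
under eq_bigr do rewrite signr_bernoulli mulrBl mulrBr.
rewrite sumrB -/(bernpoly K x).
have -> : \sum_(j < K.+1) 'C(K, j)%:R * ((j == 1%N :> nat)%:R * x ^+ (K - j))
          = K%:R * x ^+ K.-1.
  case: K => [|k]; first by rewrite big_ord1 !mul0r mulr0.
  rewrite 2!big_ord_recl big1 => [|j _]; last by rewrite mul0r mulr0.
  by rewrite bin1 /= subn1 !(mul0r, mulr0, mul1r, add0r, addr0).
by have := bernpolyS K (x - 1); rewrite subrK => <-; ring.
Qed.

Lemma sum_pow_bernpoly kk t n : (t <= n)%N ->
  kk.+1%:R * \sum_(t <= l < n) (l%:R : rat) ^+ kk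
  = bernpoly kk.+1 (n%:R - 1) - bernpoly kk.+1 (t%:R - 1).
Proof.
move=> le_tn; rewrite mulr_sumr.
apply: (telescope_sumr_eq (fun l => bernpoly kk.+1 (l%:R - 1))) => // l _.
by have := bernpolyS kk.+1 (l%:R - 1); rewrite subrK -[l.+1%:R]natr1 addrK => ->.
Qed.

Definition faulhaber_coef (kk j : nat) : rat :=
  (kk.+1%:R)^-1 * 'C(kk.+1, j)%:R * bernoulli j.

Lemma faulhaber kk t n : (t < n)%N ->
  \sum_(t.+1 <= l < n) (l%:R : rat) ^+ kk =
  \sum_(j < kk.+2) faulhaber_coef kk j *
    ((-1) ^+ j * n%:R ^+ (kk.+1 - j) - t%:R ^+ (kk.+1 - j)).
Proof.
move=> lt_tn; have kk1_neq0 : kk.+1%:R != 0 :> rat by rewrite pnatr_eq0.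
apply: (mulfI kk1_neq0).
rewrite sum_pow_bernpoly // -[t.+1%:R]natr1 addrK bernpolyB1 /bernpoly.
rewrite -sumrB mulr_sumr; apply: eq_bigr => j _.
by rewrite /faulhaber_coef !mulrA mulfV // mul1r; ring.
Qed.

Lemma sum_nat_triangle (R : comPzSemiRingType) (f g : nat -> R) n :
  \sum_(1 <= l < n) f l * \sum_(1 <= t < l) g t
  = \sum_(1 <= t < n) g t * \sum_(t.+1 <= l < n) f l.
Proof.
transitivity (\sum_(1 <= l < n) \sum_(1 <= t < n | (t < l)%N) f l * g t).
  apply: eq_big_nat => l /andP[_ lt_ln].
  by rewrite mulr_sumr (big_nat_widen _ _ _ _ _ (ltnW lt_ln)).
rewrite (exchange_big_dep_nat xpredT) //=; apply: eq_big_nat => t _.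
rewrite mulr_sumr (@big_nat_widenl _ _ _ t.+1 1) //.
by apply: eq_bigr => l _; rewrite mulrC.
Qed.

Lemma exprzN_subn (F : fieldType) (x : F) (b : int) (e : nat) :
  x != 0 -> x ^ (- (b - e%:Z)) = x ^ (- b) * x ^+ e.
Proof. by move=> x_neq0; rewrite opprB addrC expfzDr. Qed.

Section LinearCombinations.

Variables (I : finType) (w c d : I -> rat).

Lemma zrev_cons_lincomb (e : I -> nat) (A : seq int) (X Y : I -> seq int) b m :
  (forall n, (0 < n)%N -> zrev A n =
     \sum_(j : I) w j * (c j * n%:R ^+ e j * zrev (X j) n - d j * zrev (Y j) n)) ->
  zrev (b :: A) m =
  \sum_(j : I) w j * (c j * zrev ((b - (e j)%:Z) :: X j) m - d j * zrev (b :: Y j) m).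
Proof.
move=> hA /=.
transitivity (\sum_(1 <= n < m) \sum_(j : I) w j *
    (c j * (n%:R ^ (- (b - (e j)%:Z)) * zrev (X j) n)
     - d j * (n%:R ^ (- b) * zrev (Y j) n))).
  apply: eq_big_nat => n /andP[n_gt0 _]; rewrite hA // mulr_sumr.
  by apply: eq_bigr => j _; rewrite exprzN_subn ?pnatr_eq0 -?lt0n //; ring.
rewrite exchange_big /=; apply: eq_bigr => j _.
by rewrite !mulr_sumr -sumrB mulr_sumr.
Qed.

Lemma zrev_cat_lincomb (A : seq int) (X Y : I -> seq int) :
  (forall m, zrev A m =
     \sum_(j : I) w j * (c j * zrev (X j) m - d j * zrev (Y j) m)) ->
  forall P m, zrev (P ++ A) m =
  \sum_(j : I) w j * (c j * zrev (P ++ X j) m - d j * zrev (P ++ Y j) m).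
Proof.
move=> hA; elim=> [|b P IH] m; first exact: hA.
rewrite cat_cons (@zrev_cons_lincomb (fun=> 0%N) _ (fun j => P ++ X j)
                                     (fun j => P ++ Y j)) => [|n _].
  by under eq_bigr do rewrite subr0.
by rewrite IH; apply: eq_bigr => j _; rewrite expr0 mulr1.
Qed.

End LinearCombinations.

Lemma zrev_nonpos_nil kk n : (0 < n)%N ->
  zrev [:: - kk%:Z] n = \sum_(j < kk.+2) faulhaber_coef kk j *
    ((-1) ^+ j * n%:R ^+ (kk.+1 - j) * zrev [::] n
     - (j == kk.+1 :> nat)%:R * zrev [::] n).
Proof.
move=> n_gt0 /=; rewrite (eq_bigr (fun l => l%:R ^+ kk)) => [|l _]; last first.
  by rewrite opprK mulr1.
rewrite (faulhaber kk n_gt0); apply: eq_bigr => j _.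
rewrite mulr0n expr0n.
have -> : (kk.+1 - j == 0)%N = (j == kk.+1 :> nat).
  by rewrite subn_eq0 eqn_leq -[(j <= kk.+1)%N]ltnS ltn_ord.
by rewrite !mulr1.
Qed.

Lemma zrev_nonpos_cons kk a T n :
  zrev [:: - kk%:Z, a & T] n = \sum_(j < kk.+2) faulhaber_coef kk j *
    ((-1) ^+ j * n%:R ^+ (kk.+1 - j) * zrev (a :: T) n
     - zrev ((a - (kk.+1 - j)%:Z) :: T) n).
Proof.
rewrite /= (sum_nat_triangle (fun l => l%:R ^ (- - kk%:Z))
                             (fun t => t%:R ^ (- a) * zrev T t)).
transitivity (\sum_(1 <= t < n) \sum_(j < kk.+2) faulhaber_coef kk j *
    ((-1) ^+ j * n%:R ^+ (kk.+1 - j) * (t%:R ^ (- a) * zrev T t)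
     - t%:R ^ (- (a - (kk.+1 - j)%:Z)) * zrev T t)).
  apply: eq_big_nat => t /andP[t_gt0 lt_tn].
  rewrite (eq_bigr (fun l => l%:R ^+ kk)) => [|l _]; last by rewrite opprK.
  rewrite faulhaber // mulr_sumr; apply: eq_bigr => j _.
  by rewrite exprzN_subn ?pnatr_eq0 -?lt0n //; ring.
rewrite exchange_big /=; apply: eq_bigr => j _.
by rewrite !mulr_sumr -sumrB mulr_sumr.
Qed.

Lemma subz_subn_ord kk (j : 'I_kk.+2) (b : int) :
  b - (kk.+1 - j)%:Z = b - kk%:Z - 1 + j%:Z.
Proof. by have := ltn_ord j; lia. Qed.

Lemma zeta_p_nonpos_first kk k2 R p :
  zeta_p p [:: - kk%:Z, k2 & R] = \sum_(j < kk.+2) faulhaber_coef kk j *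
    ((-1) ^+ j * zeta_p p ((k2 - kk%:Z - 1 + j%:Z) :: R)
     - (j == kk.+1 :> nat)%:R * zeta_p p (k2 :: R)).
Proof.
have base m : zrev [:: k2; - kk%:Z] m = \sum_(j < kk.+2) faulhaber_coef kk j *
    ((-1) ^+ j * zrev [:: k2 - (kk.+1 - j)%:Z] m
     - (j == kk.+1 :> nat)%:R * zrev [:: k2] m).
  apply: (zrev_cons_lincomb (X := fun=> [::]) (Y := fun=> [::])).
  exact: zrev_nonpos_nil.
rewrite /zeta_p !rev_cons -!cats1 -catA (zrev_cat_lincomb base).
by apply: eq_bigr => j _; rewrite !rev_cons -!cats1 subz_subn_ord.
Qed.

Lemma zeta_p_nonpos_middle kk L a b R p :
  zeta_p p (L ++ [:: a, - kk%:Z, b & R]) = \sum_(j < kk.+2) faulhaber_coef kk j *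
    ((-1) ^+ j * zeta_p p (L ++ [:: a, b - kk%:Z - 1 + j%:Z & R])
     - zeta_p p (L ++ [:: a - kk%:Z - 1 + j%:Z, b & R])).
Proof.
have base m : zrev [:: b, - kk%:Z, a & rev L] m = \sum_(j < kk.+2) faulhaber_coef kk j *
    ((-1) ^+ j * zrev [:: b - (kk.+1 - j)%:Z, a & rev L] m
     - 1 * zrev [:: b, a - (kk.+1 - j)%:Z & rev L] m).  (* the 1 fits zrev_cons_lincomb *)
  apply: zrev_cons_lincomb => n _; rewrite zrev_nonpos_cons.
  by apply: eq_bigr => j _; rewrite mul1r.
rewrite /zeta_p !rev_cat !rev_cons -!cats1 -!catA /= (zrev_cat_lincomb base).
apply: eq_bigr => j _.
by rewrite !rev_cat !rev_cons -!cats1 -!catA /= mul1r !subz_subn_ord.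
Qed.

Lemma zeta_p_nonpos_last kk L a p :
  zeta_p p (L ++ [:: a; - kk%:Z]) = \sum_(j < kk.+2) faulhaber_coef kk j *
    ((-1) ^+ j * zeta_p p (L ++ [:: a]) * p%:R ^+ (kk.+1 - j)
     - zeta_p p (L ++ [:: a - kk%:Z - 1 + j%:Z])).
Proof.
rewrite /zeta_p rev_cat (zrev_nonpos_cons kk a (rev L) p); apply: eq_bigr => j _.
rewrite !rev_cat [rev [:: a] ++ _]/= [rev [:: _] ++ _]/= subz_subn_ord.
by rewrite [(-1) ^+ j * zrev _ _ * _]mulrAC.
Qed.

Lemma eqfun_Aeq (x y : Afam) : x =1 y -> Aeq x y.
Proof.
move=> eq_xy n; exists 0%N => p p_pr _.
by rewrite /pdiv_rat eq_xy subrr dvdz0 dvdzE dvdn1 gtn_eqF ?prime_gt1.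
Qed.

Lemma sum_faulhaber_coef kk (F : 'I_kk.+2 -> rat) :
  (kk.+1%:R)^-1 * \sum_(j < kk.+2) 'C(kk.+1, j)%:R * bernoulli j * F j
  = \sum_(j < kk.+2) faulhaber_coef kk j * F j.
Proof. by rewrite mulr_sumr; apply: eq_bigr => j _; rewrite !mulrA. Qed.

Lemma split_window3 (T : Type) (s : seq T) n : (n + 3 <= size s)%N ->
  exists L a x b R, s = L ++ [:: a, x, b & R] /\ size L = n.
Proof.
move=> le_n3_s; have : (3 <= size (drop n s))%N by rewrite size_drop; lia.
case E: (drop n s) => [|a [|x [|b R]]] // _.
exists (take n s), a, x, b, R; rewrite -E cat_take_drop size_takel //; lia.
Qed.

Lemma split_last2 (T : Type) (s : seq T) : (2 <= size s)%N ->
  exists L a x, s = L ++ [:: a; x].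
Proof.
case/lastP: s => [|s x] //; case/lastP: s => [|L a] // _.
by exists L, a, x; rewrite -!cats1 -catA.
Qed.

Theorem theorem1p3 (ks : seq int) (i kk : nat) :
  (2 <= size ks)%N -> (1 <= i <= size ks)%N ->
  nth 0 ks i.-1 = - (kk%:Z) ->
  [/\
   (* (i) *)
   i = 1%N ->
     Aeq (zetaA ks)
       (fun p => (kk.+1%:R)^-1 * \sum_(j < kk.+2)
          'C(kk.+1, j)%:R * bernoulli j *
          ((-1) ^+ j * zeta_p p ((nth 0 ks 1 - kk%:Z - 1 + j%:Z) :: drop 2 ks)
           - (j == kk.+1 :> nat)%:R * zeta_p p (drop 1 ks))),
   (* (ii) *)
   (1 < i < size ks)%N ->
     Aeq (zetaA ks)
       (fun p => (kk.+1%:R)^-1 * \sum_(j < kk.+2)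
          'C(kk.+1, j)%:R * bernoulli j *
          ((-1) ^+ j * zeta_p p (take i.-1 ks ++
                         (nth 0 ks i - kk%:Z - 1 + j%:Z) :: drop i.+1 ks)
           - zeta_p p (take (i - 2) ks ++
                         (nth 0 ks (i - 2) - kk%:Z - 1 + j%:Z) :: drop i ks)))
   &
   (* (iii) *)
   i = size ks ->
     Aeq (zetaA ks)
       (fun p => (kk.+1%:R)^-1 * \sum_(j < kk.+2)
          'C(kk.+1, j)%:R * bernoulli j *
          ((-1) ^+ j * zeta_p p (take (size ks).-1 ks) * (p%:R) ^+ (kk.+1 - j)
           - zeta_p p (take (size ks - 2) ks ++
                         [:: nth 0 ks (size ks - 2) - kk%:Z - 1 + j%:Z])))].
Proof.
move=> size_ks /andP[i_gt0 le_i_size] ks_i; split.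
- move=> i1; subst i; case: ks size_ks {le_i_size} ks_i => [|k1 [|k2 R]] //= _ ->.
  by apply: eqfun_Aeq => p; rewrite sum_faulhaber_coef drop0; exact: zeta_p_nonpos_first.
- move=> /andP[lt1i lt_i_size]; move: ks_i.
  have le_window : (i - 2 + 3 <= size ks)%N by lia.
  have [L [a [x [b [R [-> size_L]]]]]] := split_window3 le_window.
  have [-> -> -> ->] : [/\ i.-1 = size L + 1, i.+1 = size L + 3,
                          i - 2 = size L + 0 & i = size L + 2]%N by split; lia.
  rewrite !(take_cat, drop_cat, nth_cat) !ltnNge !leq_addr !addKn /= => ->.
  apply: eqfun_Aeq => p; rewrite sum_faulhaber_coef /zetaA zeta_p_nonpos_middle.
  by apply: eq_bigr => j _; rewrite drop0 cats0 -catA.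
- move=> ei; subst i; move: ks_i.
  have [L [a [x ->]]] := split_last2 size_ks.
  rewrite size_cat [size [:: _; _]]/=.
  have [-> ->] : ((size L + 2).-1 = size L + 1 /\ size L + 2 - 2 = size L + 0)%N.
    by split; lia.
  rewrite !(take_cat, nth_cat) !ltnNge !leq_addr !addKn /= cats0 => ->.
  by apply: eqfun_Aeq => p; rewrite sum_faulhaber_coef /zetaA zeta_p_nonpos_last.
Qed.
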